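(* Let $a,d,b,k\in\mathbb{P}$ with $b\geq 2$, $\gcd(a,d)=1$ and $a\geq k-1$, and let $$A=\left(a,\ ba+d,\ b^2a+\tfrac{b^2-1}{b-1}d,\ \dots,\ b^ka+\tfrac{b^k-1}{b-1}d\right).$$ Fix $0\leq r\leq a-1$ and for $m\in\mathbb{N}$ put $N_{dr}(m)=O(ma+r)\cdot a+(ma+r)d$. Then $N_{dr}(m)$ is (weakly) increasing in $m\in\mathbb{N}$, i.e. $N_{dr}(m+1)\ge N_{dr}(m)$ for all $m$. More precisely, if $(x_1,\dots,x_k)$ is the greedy presentation of $r$, then $$N_{dr}=\left(\sum_{i=1}^k x_i\right)a+r\big((b-1)a+d\big)=\left(\sum_{i=1}^k b^i x_i\right)a+rd.$$
   Context: $\mathbb{P}$ denotes the positive integers, $\mathbb{N}$ the nonnegative integers. $\langle A\rangle$ is the set of all $\mathbb{N}$-linear combinations of the entries of $A$. For an integer $j$, $N_j=\min\{s\in\langle A\rangle : s\equiv j\pmod a\}$. Let $B=(B_1,\dots,B_k)$ with $B_i=\frac{b^i-1}{b-1}$. For $M\in\mathbb{N}$, $O(M)=\min\{\sum_{i=1}^k b^i x_i : \sum_{i=1}^k B_i x_i=M,\ x_i\in\mathbb{N}\}$. The greedy presentation of $M\in\mathbb{N}$ is the tuple $(x_1,\dots,x_k)\in\mathbb{N}^k$ with $\sum_i B_i x_i=M$ obtained by the greedy algorithm (take $x_k$ maximal, then $x_{k-1}$ maximal for the remainder, etc.); equivalently it is the representation satisfying $x_k=\lfloor (b-1)M/(b^k-1)\rfloor$,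 $x_i\in\{0,1,\dots,b\}$ for $1\le i\le k-1$, and if $2\le i\le k-1$ and $x_i=b$ then $x_1=\cdots=x_{i-1}=0$. *)

From mathcomp Require Import all_boot.
From Stdlib Require Import ClassicalEpsilon.

Set Implicit Arguments.
Unset Strict Implicit.
Unset Printing Implicit Defensive.

Definition natmin (P : nat -> Prop) : nat :=
  epsilon (inhabits 0) (fun n => P n /\ forall m, P m -> n <= m).

(* B_i = (b^i - 1)/(b - 1) = 1 + b + ... + b^(i-1). *)
Definition Bn (b i : nat) : nat := \sum_(j < i) b ^ j.

Definition Agen (a d b i : nat) : nat :=
  if i is 0 then a else b ^ i * a + Bn b i * d.

Definition inSG (a d b k s : nat) : Prop :=
  exists c : nat -> nat, s = \sum_(0 <= i < k.+1) c i * Agen a d b i.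

Definition Nj (a d b k j : nat) : nat :=
  natmin (fun s => inSG a d b k s /\ s = j %[mod a]).

Definition Ofun (b k M : nat) : nat :=
  natmin (fun v => exists x : nat -> nat,
    \sum_(1 <= i < k.+1) Bn b i * x i = M /\
    v = \sum_(1 <= i < k.+1) b ^ i * x i).

Definition Ndr (a d b k r m : nat) : nat :=
  Ofun b k (m * a + r) * a + (m * a + r) * d.

(* Greedy algorithm: grem n = remainder after choosing x_k, ..., x_{k-n+1}. *)
Fixpoint grem (b k M n : nat) : nat :=
  if n is n'.+1 then grem b k M n' %% Bn b (k - n') else M.

Definition greedy (b k M i : nat) : nat := grem b k M (k - i) %/ Bn b i.

(* Since b^i = (b - 1) B_i + 1, a presentation x of M costs (b - 1) M + sum x_i,
   so O(M) = (b - 1) M + c(M) with c(M) the least number of parts B_i summing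
   to M.  The repunits B_i form a greedy-optimal coin system, and adding 1 to M
   lowers the greedy count by at most b - 1 (it can only complete a block
   b B_i + 1 = B_(i+1)), so O is nondecreasing.  An element of <A> congruent to
   dr is c_0 a + (sum b^i c_i) a + M d with M = r mod a because gcd(a, d) = 1;
   it is therefore at least O(M) a + M d >= O(r) a + r d, and the greedy
   presentation of r attains this value. *)
From mathcomp Require Import all_boot zify.
From Stdlib Require Import ClassicalEpsilon.

Lemma natmin_eq (P : nat -> Prop) n :
  P n -> (forall m, P m -> n <= m) -> natmin P = n.
Proof.
move=> Pn n_min; rewrite /natmin.
have [Pe e_min] := epsilon_spec (inhabits 0)
  (fun n => P n /\ forall m, P m -> n <= m) (ex_intro _ n (conj Pn n_min)).
by apply/eqP; rewrite eqn_leq e_min // n_min.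
Qed.

Lemma eqn_modMr_coprime p m n d :
  coprime d p -> (m * p == n * p %[mod d]) = (m == n %[mod d]).
Proof.
move=> co_dp; wlog le_nm : m n / n <= m.
  move=> le_case; have [/le_case //|/ltnW/le_case] := leqP n m.
  by rewrite eq_sym [(m == _ %[mod _])]eq_sym.
by rewrite !eqn_mod_dvd ?leq_mul2r ?le_nm ?orbT // -mulnBl Gauss_dvdl.
Qed.

Section Repunits.

Variable b : nat.
Hypothesis b_gt0 : 0 < b.

Lemma Bn0 : Bn b 0 = 0.
Proof. by rewrite /Bn big_ord0. Qed.

Lemma BnS i : Bn b i.+1 = b * Bn b i + 1.
Proof.
rewrite /Bn big_ord_recl expn0 addnC big_distrr; congr (_ + _).
by apply: eq_bigr => j _; rewrite expnS.
Qed.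

Lemma Bn1 : Bn b 1 = 1.
Proof. by rewrite BnS Bn0 muln0. Qed.

Lemma Bn_gt0 i : 0 < Bn b i.+1.
Proof. by rewrite BnS addn1. Qed.

Lemma expn_Bn i : b ^ i = (b - 1) * Bn b i + 1.
Proof.
elim: i => [|i IHi]; first by rewrite Bn0 muln0.
by rewrite expnS IHi BnS; case: b b_gt0 => // c _; rewrite subn1 /=; lia.
Qed.

Lemma sum_expn_Bn m n (x : nat -> nat) :
  \sum_(m <= i < n) b ^ i * x i =
  (b - 1) * \sum_(m <= i < n) Bn b i * x i + \sum_(m <= i < n) x i.
Proof.
rewrite big_distrr -big_split; apply: eq_bigr => i _.
by rewrite expn_Bn mulnDl mul1n /= mulnA.
Qed.

End Repunits.

Section Greedy.

Variable b : nat.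

Lemma gremS k M n : grem b k.+1 M n.+1 = grem b k (M %% Bn b k.+1) n.
Proof. by elim: n => [|n IHn] //=; rewrite -/(grem b k.+1 M n.+1) IHn subSS. Qed.

Lemma greedyS k M i : 0 < i <= k ->
  greedy b k.+1 M i = greedy b k (M %% Bn b k.+1) i.
Proof. by case/andP=> _ le_ik; rewrite /greedy subSn // gremS. Qed.

Lemma greedy_top k M : greedy b k M k = M %/ Bn b k.
Proof. by rewrite /greedy subnn. Qed.

Lemma greedy0 k M : greedy b k M 0 = 0.
Proof. by rewrite /greedy Bn0 divn0. Qed.

Lemma greedy_sum k M : \sum_(1 <= i < k.+2) Bn b i * greedy b k.+1 M i = M.
Proof.
elim: k M => [|k IHk] M; first by rewrite big_nat1 greedy_top Bn1 mul1n divn1.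
rewrite big_nat_recr //= greedy_top.
rewrite (eq_big_nat _ _ (F2 := fun i => Bn b i * greedy b k.+1 (M %% Bn b k.+2) i)).
  by rewrite IHk addnC mulnC -divn_eq.
by move=> i i_range; rewrite greedyS //; lia.
Qed.

Definition ncoins k M := \sum_(1 <= i < k.+1) greedy b k M i.

Lemma ncoins_k0 M : ncoins 0 M = 0.
Proof. by rewrite /ncoins big_geq. Qed.

Lemma ncoinsS k M : ncoins k.+1 M = M %/ Bn b k.+1 + ncoins k (M %% Bn b k.+1).
Proof.
rewrite /ncoins big_nat_recr //= greedy_top addnC; congr (_ + _).
by apply: eq_big_nat => i i_range; apply: greedyS; lia.
Qed.

Lemma ncoins0 k : ncoins k 0 = 0.
Proof. by elim: k => [|k IHk]; rewrite ?ncoins_k0 // ncoinsS div0n mod0n IHk. Qed.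

Lemma ncoinsMDl k c N : ncoins k.+1 (c * Bn b k.+1 + N) = c + ncoins k.+1 N.
Proof. by rewrite !ncoinsS divnMDl ?Bn_gt0 // modnMDl addnA. Qed.

Hypothesis b_gt0 : 0 < b.

Lemma ncoins_leS k N : ncoins k N <= ncoins k N.+1 + (b - 1).
Proof.
elim: k N => [|k IHk] N; first by rewrite !ncoins_k0.
rewrite !ncoinsS; set B := Bn b k.+1.
have B_gt0 : 0 < B by apply: Bn_gt0.
have := divn_eq N B; have := ltn_pmod N B_gt0.
move: (N %/ B) (N %% B) => q r lt_rB ->.
rewrite -addnS !divnMDl // !modnMDl.
have [lt_r1B|] := ltnP r.+1 B.
  by rewrite (divn_small lt_r1B) (modn_small lt_r1B) addn0; have := IHk r; lia.
(* When r + 1 = B_(k+1) = b B_k + 1, the b coins B_k making up r merge into one. *)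
move=> le_Br1; have r1B : r.+1 = B by lia.
rewrite r1B divnn B_gt0 modnn ncoins0.
have -> : r = b * Bn b k by move: r1B; rewrite /B BnS addn1 => -[].
case: k {IHk B r1B lt_rB le_Br1 B_gt0} => [|k]; first by rewrite ncoins_k0; lia.
by rewrite -[b * _]addn0 ncoinsMDl ncoins0; lia.
Qed.

Lemma ncoins_leD k N n : ncoins k N <= ncoins k (N + n) + (b - 1) * n.
Proof.
elim: n => [|n IHn]; first by rewrite addn0 muln0 addn0.
by have := ncoins_leS k (N + n); rewrite addnS; lia.
Qed.

Lemma ncoins_leMDl k q N : ncoins k.+1 N + q <= ncoins k.+1 (q * Bn b k.+2 + N).
Proof.
elim: q => [|q IHq]; first by rewrite addn0.
have -> : q.+1 * Bn b k.+2 + N = b * Bn b k.+1 + (q * Bn b k.+2 + N).+1.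
  by rewrite BnS; lia.
by rewrite ncoinsMDl; have := ncoins_leS k.+1 (q * Bn b k.+2 + N); lia.
Qed.

Lemma ncoins_leSk k M : ncoins k.+2 M <= ncoins k.+1 M.
Proof.
rewrite ncoinsS; have := ncoins_leMDl k (M %/ Bn b k.+2) (M %% Bn b k.+2).
by rewrite -divn_eq; lia.
Qed.

Lemma ncoins_min k (x : nat -> nat) :
  ncoins k.+1 (\sum_(1 <= i < k.+2) Bn b i * x i) <= \sum_(1 <= i < k.+2) x i.
Proof.
elim: k => [|k IHk].
  by rewrite !big_nat1 Bn1 mul1n ncoinsS ncoins_k0 Bn1 divn1 addn0.
rewrite !(big_nat_recr k.+2) //= addnC mulnC ncoinsMDl.
by have := ncoins_leSk k (\sum_(1 <= i < k.+2) Bn b i * x i); lia.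
Qed.

End Greedy.

Section Ofun.

Variables b k : nat.
Hypotheses (b_gt0 : 0 < b) (k_gt0 : 0 < k).

Lemma Ofun_eq M : Ofun b k M = (b - 1) * M + ncoins b k M.
Proof.
case: k k_gt0 => // k' _; apply: natmin_eq.
  by exists (greedy b k'.+1 M); rewrite greedy_sum sum_expn_Bn // greedy_sum.
by move=> v [x [<- ->]]; rewrite sum_expn_Bn //; have := ncoins_min b b_gt0 k' x; lia.
Qed.

Lemma Ofun_greedy M : Ofun b k M = \sum_(1 <= i < k.+1) b ^ i * greedy b k M i.
Proof. by rewrite Ofun_eq; case: k k_gt0 => // k' _; rewrite sum_expn_Bn // greedy_sum. Qed.

Lemma Ofun_le (x : nat -> nat) :
  Ofun b k (\sum_(1 <= i < k.+1) Bn b i * x i) <= \sum_(1 <= i < k.+1) b ^ i * x i.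
Proof.
rewrite Ofun_eq; case: k k_gt0 => // k' _; rewrite sum_expn_Bn //.
by have := ncoins_min b b_gt0 k' x; lia.
Qed.

Lemma Ofun_monotone : {homo Ofun b k : M N / M <= N}.
Proof.
move=> M N /subnKC <-; rewrite !Ofun_eq.
by have := ncoins_leD b b_gt0 k M (N - M); lia.
Qed.

End Ofun.

Definition Nval a d b k M := Ofun b k M * a + M * d.

Lemma Nval_monotone a d b k :
  0 < b -> 0 < k -> {homo Nval a d b k : M N / M <= N}.
Proof.
move=> b_gt0 k_gt0 M N le_MN.
by apply: leq_add; apply: leq_mul => //; apply: Ofun_monotone.
Qed.

Lemma sum_Agen a d b k (c : nat -> nat) :
  \sum_(0 <= i < k.+1) c i * Agen a d b i =
  c 0 * a + (\sum_(1 <= i < k.+1) b ^ i * c i) * a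
          + (\sum_(1 <= i < k.+1) Bn b i * c i) * d.
Proof.
rewrite big_ltn //= -addnA !big_distrl -big_split; congr (_ + _).
by apply: eq_big_nat => -[|i] //= _; lia.
Qed.

Lemma Nj_dr a d b k r : 0 < a -> 0 < b -> 0 < k -> coprime a d -> r < a ->
  Nj a d b k (d * r) = Nval a d b k r.
Proof.
move=> a_gt0 b_gt0 k_gt0 co_ad lt_ra; apply: natmin_eq.
  split; last by rewrite /Nval modnMDl mulnC.
  exists (greedy b k r); rewrite sum_Agen greedy0 mul0n add0n /Nval Ofun_greedy //.
  by case: k k_gt0 => // k' _; rewrite greedy_sum.
move=> _ [[c ->]]; rewrite sum_Agen -addnA modnMDl modnMDl.
set M := \sum_(1 <= i < k.+1) Bn b i * c i => /eqP.
rewrite [d * r]mulnC eqn_modMr_coprime // (modn_small lt_ra) => /eqP M_mod.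
apply: (@leq_trans (Nval a d b k M)).
  by apply: Nval_monotone => //; rewrite -M_mod leq_mod.
apply: leq_trans (leq_addl (c 0 * a) _).
by rewrite /Nval leq_add2r leq_mul2r Ofun_le ?orbT.
Qed.

Theorem lemma3p3 (a d b k r : nat) :
  0 < a -> 0 < d -> 0 < k -> 2 <= b -> coprime a d -> k - 1 <= a -> r < a ->
  (forall m : nat, Ndr a d b k r m <= Ndr a d b k r m.+1) /\
  Nj a d b k (d * r) =
    (\sum_(1 <= i < k.+1) greedy b k r i) * a + r * ((b - 1) * a + d) /\
  Nj a d b k (d * r) =
    (\sum_(1 <= i < k.+1) b ^ i * greedy b k r i) * a + r * d.
Proof.
move=> a_gt0 _ k_gt0 b_ge2 co_ad _ lt_ra.
have b_gt0 : 0 < b by apply: leq_trans b_ge2.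
split.
  move=> m; apply: Nval_monotone => //.
  by rewrite leq_add2r leq_mul2r leqnSn orbT.
rewrite Nj_dr // /Nval -Ofun_greedy //; split=> //.
by rewrite Ofun_eq // /ncoins; lia.
Qed.
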